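(* Let $Q$ be a fixed IPC formula and let $\phi : K \to L$ be the map defined in the context. Then for every PC formula $Z \in K$, $Q \vdash_L \phi(Z)$.
   Context: $K$ is the set of PC formulas: built from propositional variables and a propositional constant $\mathfrak{f}$ using only the conditional $\supset$. $L \subseteq K$ is the set of IPC formulas: built from propositional variables using only $\supset$. IPC has Modus Ponens as its only rule and axioms all instances (with IPC formulas) of $(\#1)\ A \supset (B \supset A)$; $(\#2)\ [A \supset (B \supset C)] \supset [(A \supset B) \supset (A \supset C)]$; $(\mathbb{P})\ [(A \supset B) \supset A] \supset A$. $\Gamma \vdash_L Y$ means there is a deduction of $Y$ from hypotheses $\Gamma$ in IPC. For an IPC formula $Z$ write $QZ := Z \supset Q$ and $QQZ := (Z \supset Q)\supset Q$. The map $\phi : K \to L$ is defined by induction on the number of conditionals: $\phi(\mathfrak{f}) = Q$; $\phi(p) = QQp = (p \supset Q) \supset Q$ for each propositional variable $p$; and $\phi(X \supset Y) = \phi(X) \supset \phi(Y)$. *)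

From Stdlib Require Import List.

Inductive PCform : Type :=
  | PVar : nat -> PCform
  | PF : PCform
  | PImp : PCform -> PCform -> PCform.

Inductive IPCform : Type :=
  | IVar : nat -> IPCform
  | IImp : IPCform -> IPCform -> IPCform.

Inductive derivL (Gamma : IPCform -> Prop) : IPCform -> Prop :=
  | dHyp : forall A, Gamma A -> derivL Gamma A
  | dAx1 : forall A B, derivL Gamma (IImp A (IImp B A))
  | dAx2 : forall A B C,
      derivL Gamma (IImp (IImp A (IImp B C)) (IImp (IImp A B) (IImp A C)))
  | dPeirce : forall A B, derivL Gamma (IImp (IImp (IImp A B) A) A)
  | dMP : forall A B, derivL Gamma (IImp A B) -> derivL Gamma A -> derivL Gamma B.

Fixpoint phi (Q : IPCform) (Z : PCform) : IPCform :=
  match Z with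
  | PF => Q
  | PVar p => IImp (IImp (IVar p) Q) Q
  | PImp X Y => IImp (phi Q X) (phi Q Y)
  end.

Definition single (Q : IPCform) : IPCform -> Prop := fun A => A = Q.


Lemma derivL_imp_weaken (Gamma : IPCform -> Prop) (A B : IPCform) :
  derivL Gamma B -> derivL Gamma (IImp A B).
Proof.
  intros HB.
  exact (dMP Gamma B (IImp A B) (dAx1 Gamma B A) HB).
Qed.

Lemma derivL_single (Q : IPCform) : derivL (single Q) Q.
Proof. apply dHyp; reflexivity. Qed.

Theorem theorem4 : forall (Q : IPCform) (Z : PCform), derivL (single Q) (phi Q Z).
Proof.
  intros Q Z.
  induction Z as [p | | X _ Y IHY]; simpl.
  - apply derivL_imp_weaken, derivL_single.
  - apply derivL_single.
  - apply derivL_imp_weaken, IHY.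
Qed.
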